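(* Let $\Gamma$ be a one-dimensional CW-complex and $n \geq 1$ an integer. Let $\Delta$ be the graph whose vertices are the edges of $\Gamma$ and whose edges link two disjoint edges of $\Gamma$, and fix an orientation of the edges of $\Gamma$ so that oriented edges of $\Gamma$ are identified with $E(\Gamma)\sqcup E(\Gamma)^{-1}$. If $\phi$ denotes the map sending the oriented hyperplane $[e,S]$ of $UC_n(\Gamma)$ to the oriented edge $e$, then $(\Delta, \phi)$ is a special coloring of $UC_n(\Gamma)$.
   Context: $UC_n(\Gamma)$ is the cube complex whose vertices are $n$-element subsets of $\Gamma^{(0)}$, whose edges join $S_1,S_2$ when $S_1\triangle S_2$ is a pair of adjacent vertices, and where $n$ edges at a common vertex span an $n$-cube when their labelling one-cells of $\Gamma$ are pairwise disjoint. An oriented edge of $UC_n(\Gamma)$ is a pair $(e,S)$ ($e$ an oriented edge of $\Gamma$, $o(e)\in S$, $t(e)\notin S$), going from $S$ to $(S\setminus\{o(e)\})\cup\{t(e)\}$; $[e,S]$ denotes the oriented hyperplane dual to it (oriented hyperplanes are classes of oriented edges under the relation generated by being parallel sides of a square). For a cube complex $X$, a special coloring $(\Delta,\phi)$ is a graph $\Delta$ and a map $\phi$ from oriented hyperplanes of $X$ to $V(\Delta)\sqcup V(\Delta)^{-1}$ such that: $\phi(J^{-1})=\phi(J)^{-1}$ for every oriented hyperplane $J$; two transverse oriented hyperplanes have adjacent colors; no two oriented hyperplanes adjacent to a given vertex have the same color; two oriented edges with the same origin whose dual oriented hyperplanes have adjacent colors span a square. (Adjacency of colors $a^{\pm1},b^{\pm1}$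 means $a,b$ adjacent in $\Delta$.) *)

From HB Require Import structures.
From mathcomp Require Import all_boot.
From mathcomp Require Import finmap.
From Stdlib Require Import Relations.Relation_Operators.

Set Implicit Arguments.
Unset Strict Implicit.
Unset Printing Implicit Defensive.

Local Open Scope fset_scope.

(* A one-dimensional CW-complex Gamma is given by a vertex type V, a type E of
   one-cells, and the two endpoints src e, tgt e of each one-cell (loops and
   multiple edges allowed).  The pair (src, tgt) fixes an orientation of the
   edges: the oriented edge (e, true) is e (from src e to tgt e), and (e, false)
   is e^{-1} (from tgt e to src e). *)

Section UC.
Variables (V : choiceType) (E : Type) (src tgt : E -> V).

Definition oorig (oe : E * bool) : V := if oe.2 then src oe.1 else tgt oe.1.
Definition oterm (oe : E * bool) : V := if oe.2 then tgt oe.1 else src oe.1.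

Definition cells_disjoint (e f : E) : Prop :=
  [/\ src e <> src f, src e <> tgt f, tgt e <> src f & tgt e <> tgt f].

Definition UCvert (n : nat) (S : {fset V}) : Prop := #|` S| = n.

Definition UCoedge := ((E * bool) * {fset V})%type.

Definition UCedge (n : nat) (x : UCoedge) : Prop :=
  [/\ UCvert n x.2, oorig x.1 \in x.2 & oterm x.1 \notin x.2].

Definition UCorig (x : UCoedge) : {fset V} := x.2.
Definition UCterm (x : UCoedge) : {fset V} :=
  (x.2 `\ oorig x.1) `|` [fset oterm x.1].

Definition UCrev (x : UCoedge) : UCoedge := ((x.1.1, ~~ x.1.2), UCterm x).

Definition UCsquare (n : nat) (x y : UCoedge) : Prop :=
  [/\ UCedge n x, UCedge n y, UCorig x = UCorig y & cells_disjoint x.1.1 y.1.1].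

Definition UCparallel (n : nat) (x y : UCoedge) : Prop :=
  exists z, UCsquare n x z /\ y = (x.1, UCterm z).

(* oriented hyperplanes = classes of oriented edges under the equivalence
   relation generated by parallelism *)
Definition UChypeq (n : nat) : UCoedge -> UCoedge -> Prop :=
  clos_refl_sym_trans UCoedge (UCparallel n).

(* the oriented hyperplanes [x] and [y] are transverse: the underlying
   (unoriented) hyperplanes cross in some square *)
Definition UCtransverse (n : nat) (x y : UCoedge) : Prop :=
  exists x' y', (UChypeq n x x' \/ UChypeq n (UCrev x) x') /\
                (UChypeq n y y' \/ UChypeq n (UCrev y) y') /\ UCsquare n x' y'.

(* Delta is a graph with vertex
   type D and adjacency adj (symmetric, irreflexive); colors V(Delta) ⊔ V(Delta)^{-1}
   are D * bool, (d, true) = d and (d, false) = d^{-1}.  A map phi from oriented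
   hyperplanes is given as a map on oriented edges which is constant on
   hyperplane classes. *)
Definition special_coloring_UC (n : nat) (D : Type) (adj : D -> D -> Prop)
    (phi : UCoedge -> D * bool) : Prop :=
  [/\
      (forall a b, adj a b -> adj b a) /\ (forall a, ~ adj a a),
      (forall x y, UCedge n x -> UChypeq n x y -> phi x = phi y),
      (forall x, UCedge n x -> phi (UCrev x) = ((phi x).1, ~~ (phi x).2)),
      (forall x y, UCedge n x -> UCedge n y -> UCtransverse n x y ->
         adj (phi x).1 (phi y).1) &
      (forall x y, UCedge n x -> UCedge n y -> UCorig x = UCorig y ->
         ~ UChypeq n x y -> phi x <> phi y) /\
      (forall x y, UCedge n x -> UCedge n y -> UCorig x = UCorig y ->
         adj (phi x).1 (phi y).1 -> UCsquare n x y)].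

End UC.

(* Every parallelism step keeps the labelling oriented edge of Gamma, so labels
   are constant on oriented hyperplanes; an oriented edge of UC_n(Gamma) is
   determined by its origin and its label, so distinct hyperplanes at a vertex
   get distinct colors; and two edges at a common vertex span a square exactly
   when their labels are disjoint cells, i.e. adjacent in Delta. *)
From HB Require Import structures.
From mathcomp Require Import all_boot.
From mathcomp Require Import finmap.
From Stdlib Require Import Relations.Relation_Operators.

Set Implicit Arguments.
Unset Strict Implicit.
Unset Printing Implicit Defensive.

Section UCColoring.
Variables (V : choiceType) (E : Type) (src tgt : E -> V) (n : nat).

Lemma cells_disjoint_sym (e f : E) :
  cells_disjoint src tgt e f -> cells_disjoint src tgt f e.
Proof. by case=> h1 h2 h3 h4; split=> h; [apply: h1 | apply: h3 | apply: h2 | apply: h4]. Qed.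

Lemma cells_disjoint_irrefl (e : E) : ~ cells_disjoint src tgt e e.
Proof. by case. Qed.

Lemma UCparallel_label (x y : UCoedge V E) : UCparallel src tgt n x y -> x.1 = y.1.
Proof. by case=> z [_ ->]. Qed.

Lemma UChypeq_label (x y : UCoedge V E) : UChypeq src tgt n x y -> x.1 = y.1.
Proof. by elim=> [a b /UCparallel_label | a | a b _ -> | a b c _ -> _ ->]. Qed.

Lemma UChypeq_cell (x y : UCoedge V E) :
  UChypeq src tgt n x y \/ UChypeq src tgt n (UCrev src tgt x) y -> x.1.1 = y.1.1.
Proof. by case=> /UChypeq_label <-. Qed.

Lemma UCtransverse_disjoint (x y : UCoedge V E) :
  UCtransverse src tgt n x y -> cells_disjoint src tgt x.1.1 y.1.1.
Proof.
by case=> [x' [y' [/UChypeq_cell -> [/UChypeq_cell -> [_ _ _]]]]].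
Qed.

Lemma UCoedge_eq (x y : UCoedge V E) : UCorig x = UCorig y -> x.1 = y.1 -> x = y.
Proof. by case: x y => [? ?] [? ?] /= -> ->. Qed.

End UCColoring.

Theorem proposition3p7 (V : choiceType) (E : Type) (src tgt : E -> V)
    (n : nat) (hn : 1 <= n) :
  special_coloring_UC src tgt n (cells_disjoint src tgt)
    (fun x : UCoedge V E => x.1).
Proof.
split.
- split; [exact: cells_disjoint_sym | exact: cells_disjoint_irrefl].
- by move=> x y _ /UChypeq_label.
- by [].
- by move=> x y _ _ /UCtransverse_disjoint.
- split.
  + move=> x y _ _ same_orig distinct_hyp same_label; apply: distinct_hyp.
    rewrite (UCoedge_eq same_orig same_label); exact: rst_refl.
  + by move=> x y ex ey same_orig; split.
Qed.
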